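(* Let $n,d\ge1$, $p>d$, $\Delta\in\mathbb{R}^{nd\times nd}$ symmetric with $d\times d$ blocks, $\Delta_{ii}=0$, $Z^{\top}=[I_d,\dots,I_d]$, $A=ZZ^{\top}+\Delta$, $f(S)=\langle A,SS^{\top}\rangle$. Every second-order critical point $S$ of $f$ satisfies \[ (p-d)\|Z^{\top}S\|_F^2\ge(p-2d)n^2d+\|SS^{\top}\|_F^2\,d+\sum_{i=1}^n\sum_{j=1}^n\big(\|S_iS_j^{\top}\|_F^2-d\big)\mathrm{Tr}(\Delta_{ij})+(p-d)\langle\Delta,ZZ^{\top}-SS^{\top}\rangle. \]
   Context: $S\in\mathbb{R}^{nd\times p}$ has $d\times p$ blocks $S_i$ with $S_iS_i^{\top}=I_d$; $A_{ij}=I_d+\Delta_{ij}$; $\langle X,Y\rangle=\mathrm{Tr}(XY^{\top})$. $\Lambda_{ii}=\frac12\sum_j(S_iS_j^{\top}A_{ji}+A_{ij}S_jS_i^{\top})$; $T_{S_i}=\{Y\in\mathbb{R}^{d\times p}:S_iY^{\top}+YS_i^{\top}=0\}$. $S$ is a second-order critical point if $\sum_jA_{ij}S_j=\Lambda_{ii}S_i$ for all $i$ and $\sum_i\langle\Lambda_{ii},\dot S_i\dot S_i^{\top}\rangle\ge\sum_{i,j}\langle A_{ij},\dot S_i\dot S_j^{\top}\rangle$ for all $\dot S_i\in T_{S_i}$. *)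

From HB Require Import structures.
From mathcomp Require Import all_boot all_order all_algebra.
Set Implicit Arguments. Unset Strict Implicit. Unset Printing Implicit Defensive.
Import Order.TTheory GRing.Theory Num.Theory.
Local Open Scope ring_scope.

(* A matrix in R^{nd x p} is represented by its n blocks S i : 'M_(d,p);
   a matrix in R^{nd x nd} by its n*n blocks M i j : 'M_d. *)

Definition frob_ip (R : ringType) (m k : nat) (X Y : 'M[R]_(m, k)) : R :=
  \tr (X *m Y^T).

Definition frob2 (R : ringType) (m k : nat) (X : 'M[R]_(m, k)) : R :=
  frob_ip X X.

Definition Amat (R : ringType) (n d : nat) (Delta : 'I_n -> 'I_n -> 'M[R]_d)
  (i j : 'I_n) : 'M[R]_d := 1%:M + Delta i j.

Definition Lambda (R : fieldType) (n d p : nat) (A : 'I_n -> 'I_n -> 'M[R]_d)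
  (S : 'I_n -> 'M[R]_(d, p)) (i : 'I_n) : 'M[R]_d :=
  2^-1 *: \sum_(j < n) (S i *m (S j)^T *m A j i + A i j *m S j *m (S i)^T).

Definition tangent (R : ringType) (d p : nat) (Si Y : 'M[R]_(d, p)) : Prop :=
  Si *m Y^T + Y *m Si^T = 0.

Definition second_order_critical (R : realFieldType) (n d p : nat)
  (A : 'I_n -> 'I_n -> 'M[R]_d) (S : 'I_n -> 'M[R]_(d, p)) : Prop :=
  [/\ (forall i, S i *m (S i)^T = 1%:M),
      (forall i, \sum_(j < n) A i j *m S j = Lambda A S i *m S i) &
      (forall Sd : 'I_n -> 'M[R]_(d, p), (forall i, tangent (S i) (Sd i)) ->
         \sum_(i < n) frob_ip (Lambda A S i) (Sd i *m (Sd i)^T)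
         >= \sum_(i < n) \sum_(j < n) frob_ip (A i j) (Sd i *m (Sd j)^T))].

From HB Require Import structures.
From mathcomp Require Import all_boot all_order all_algebra.
From mathcomp Require Import ring.
Set Implicit Arguments. Unset Strict Implicit. Unset Printing Implicit Defensive.
Import Order.TTheory GRing.Theory Num.Theory.
Local Open Scope ring_scope.

(* With P_i = I_p - S_i^T S_i the
   projector onto the orthogonal complement of the rows of S_i, every direction
   Sd_i = X P_i is tangent since S_i P_i = 0.  Summing the second-order
   inequality over the directions X = E_ab (all elementary d x p matrices)
   turns each pairing <C, (E_ab X)(E_ab Y)^T> into Tr C * Tr (X Y^T), giving
     sum_ij Tr A_ij Tr (P_i P_j) <= sum_i Tr Lambda_ii Tr (P_i P_i).
   Here Tr (P_i P_j) = p - 2d + ||S_i S_j^T||_F^2, Tr A_ij = d + Tr Delta_ij and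
   Tr Lambda_ii = sum_j <A_ij, S_i S_j^T>; expanding yields the bound. *)

Lemma delta_mx_conj (R : comNzRingType) d p (a : 'I_d) (b : 'I_p) (M : 'M[R]_p) :
  delta_mx a b *m M *m delta_mx b a = M b b *: delta_mx a a.
Proof.
apply/matrixP=> i j; rewrite !mxE (bigD1 b) //= big1 ?addr0; last first.
  by move=> k /negPf kb; rewrite !mxE kb mulr0.
rewrite !mxE eqxx (bigD1 b) //= big1 ?addr0; last first.
  by move=> k /negPf kb; rewrite !mxE kb andbF mul0r.
by rewrite !mxE !eqxx andbT -mulnb natrM mulrAC mulrC.
Qed.

Lemma frob_ip_delta_sum (R : comNzRingType) d p q (C : 'M[R]_d) (X Y : 'M[R]_(p, q)) :
  \sum_(ab : 'I_d * 'I_p)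
     frob_ip C (delta_mx ab.1 ab.2 *m X *m (delta_mx ab.1 ab.2 *m Y)^T)
  = \tr C * \tr (X *m Y^T).
Proof.
have conj a b : delta_mx a b *m X *m (delta_mx a b *m Y)^T
                = (X *m Y^T) b b *: delta_mx a a.
  by rewrite trmx_mul trmx_delta mulmxA -(mulmxA _ X) delta_mx_conj.
rewrite -(pair_bigA _ (fun a b => frob_ip C (delta_mx a b *m X *m (delta_mx a b *m Y)^T))).
rewrite exchange_big /=.
under eq_bigr => b _ do under eq_bigr => a _ do
  rewrite conj /frob_ip linearZ /= -scalemxAr mxtraceZ trmx_delta.
under eq_bigr => b _ do
  rewrite -mulr_sumr -raddf_sum -mulmx_sumr -mx1_sum_delta mulmx1.
by rewrite -mulr_suml mulrC.
Qed.

Lemma frob_ip_1Br (R : comNzRingType) d (X Y : 'M[R]_d) :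
  frob_ip X (1%:M - Y) = \tr X - frob_ip X Y.
Proof. by rewrite /frob_ip linearB /= trmx1 mulmxBr mulmx1 linearB. Qed.

Lemma frob_ip_Amat (R : comNzRingType) n d (Delta : 'I_n -> 'I_n -> 'M[R]_d) i j
    (X : 'M[R]_d) :
  frob_ip (Amat Delta i j) X = \tr X + frob_ip (Delta i j) X.
Proof. by rewrite /frob_ip /Amat mulmxDl mul1mx mxtraceD mxtrace_tr. Qed.

Lemma frob2_sum (R : comNzRingType) (I : finType) m k (X : I -> 'M[R]_(m, k)) :
  frob2 (\sum_i X i) = \sum_i \sum_j frob_ip (X i) (X j).
Proof.
rewrite /frob2 /frob_ip linear_sum mulmx_suml raddf_sum; apply: eq_bigr => i _ /=.
by rewrite mulmx_sumr raddf_sum.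
Qed.

Definition perp_proj (R : nzRingType) d p (S : 'M[R]_(d, p)) : 'M[R]_p :=
  1%:M - S^T *m S.

Section PerpProj.
Variables (R : comNzRingType) (d p : nat).
Implicit Types S T X : 'M[R]_(d, p).

Lemma trmx_perp_proj S : (perp_proj S)^T = perp_proj S.
Proof. by rewrite /perp_proj linearB /= trmx1 trmx_mul trmxK. Qed.

Lemma mul_perp_proj S : S *m S^T = 1%:M -> S *m perp_proj S = 0.
Proof. by move=> hS; rewrite mulmxBr mulmx1 mulmxA hS mul1mx subrr. Qed.

Lemma tangent_mul_perp_proj S X : S *m S^T = 1%:M -> tangent S (X *m perp_proj S).
Proof.
move=> hS; have SP := mul_perp_proj hS.
have PS : perp_proj S *m S^T = 0 by rewrite -trmx_perp_proj -trmx_mul SP trmx0.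
by rewrite /tangent trmx_mul trmx_perp_proj mulmxA SP mul0mx -mulmxA PS mulmx0 addr0.
Qed.

Lemma mxtrace_perp_proj_mul S T : S *m S^T = 1%:M -> T *m T^T = 1%:M ->
  \tr (perp_proj S *m perp_proj T) = p%:R - 2 * d%:R + frob2 (S *m T^T).
Proof.
move=> hS hT.
have -> : frob2 (S *m T^T) = \tr (S^T *m S *m (T^T *m T)).
  by rewrite /frob2 /frob_ip trmx_mul trmxK !mulmxA (mxtrace_mulC (S *m T^T *m T)) !mulmxA.
rewrite /perp_proj mulmxBl mul1mx mulmxBr mulmx1 !linearB /= mxtrace1.
by rewrite !(mxtrace_mulC _^T) hS hT mxtrace1; ring.
Qed.

End PerpProj.

Lemma mxtrace_Lambda (R : numFieldType) n d p (A : 'I_n -> 'I_n -> 'M[R]_d)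
    (S : 'I_n -> 'M[R]_(d, p)) i :
  (forall i j, A j i = (A i j)^T) ->
  \tr (Lambda A S i) = \sum_(j < n) frob_ip (A i j) (S i *m (S j)^T).
Proof.
move=> A_sym; rewrite /Lambda mxtraceZ raddf_sum /= mulr_sumr.
apply: eq_bigr => j _; rewrite mxtraceD.
have -> : \tr (S i *m (S j)^T *m A j i) = frob_ip (A i j) (S i *m (S j)^T).
  by rewrite -mxtrace_tr /frob_ip A_sym !trmx_mul !trmxK mulmxA.
have -> : \tr (A i j *m S j *m (S i)^T) = frob_ip (A i j) (S i *m (S j)^T).
  by rewrite /frob_ip trmx_mul trmxK mulmxA.
by field.
Qed.

Lemma second_order_trace_ineq (R : realFieldType) n d p
    (A : 'I_n -> 'I_n -> 'M[R]_d) (S : 'I_n -> 'M[R]_(d, p)) :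
  second_order_critical A S ->
  \sum_i \sum_j \tr (A i j) * \tr (perp_proj (S i) *m perp_proj (S j))
  <= \sum_i \tr (Lambda A S i) * \tr (perp_proj (S i) *m perp_proj (S i)).
Proof.
case=> S_orth _ second_order; pose P i := perp_proj (S i).
pose E (ab : 'I_d * 'I_p) i := delta_mx ab.1 ab.2 *m P i.
have avg : \sum_ab \sum_i \sum_j frob_ip (A i j) (E ab i *m (E ab j)^T)
        <= \sum_ab \sum_i frob_ip (Lambda A S i) (E ab i *m (E ab i)^T).
  by apply: ler_sum => ab _; apply: second_order => i; apply: tangent_mul_perp_proj.
move: avg; rewrite exchange_big [X in _ <= X -> _]exchange_big /=.
under eq_bigr => i _ do rewrite exchange_big /=.
under eq_bigr => i _ do under eq_bigr => j _ do rewrite frob_ip_delta_sum trmx_perp_proj.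
by under [X in _ <= X -> _]eq_bigr => i _ do rewrite frob_ip_delta_sum trmx_perp_proj.
Qed.

Lemma sum_ineq_rearrange (R : numDomainType) (I J : finType) (d p : R)
    (g t h e : I -> J -> R) :
  \sum_i \sum_j (d + t i j) * (p - 2 * d + g i j)
    <= \sum_i (\sum_j (h i j + e i j)) * (p - 2 * d + d) ->
  (p - 2 * d) * ((#|I| * #|J|)%:R * d) + (\sum_i \sum_j g i j) * d
    + \sum_i \sum_j (g i j - d) * t i j + (p - d) * \sum_i \sum_j (t i j - e i j)
  <= (p - d) * \sum_i \sum_j h i j.
Proof.
rewrite -mulr_suml -card_prod !pair_bigA /=.
have cardE : #|{: I * J}|%:R * d = \sum_(k : I * J) d by rewrite sumr_const mulr_natl.
rewrite -subr_ge0 => hyp; rewrite -subr_ge0; apply: le_trans hyp _.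
rewrite cardE !mulr_sumr !mulr_suml -!big_split -!sumrB /=.
by apply: ler_sum => k _; rewrite le_eqVlt; apply/predU1l; ring.
Qed.

Theorem lemma6 (R : realFieldType) (n d p : nat)
  (Delta : 'I_n -> 'I_n -> 'M[R]_d) (S : 'I_n -> 'M[R]_(d, p)) :
  (0 < n)%N -> (0 < d)%N -> (d < p)%N ->
  (forall i j, Delta j i = (Delta i j)^T) ->
  (forall i, Delta i i = 0) ->
  second_order_critical (Amat Delta) S ->
  (p%:R - d%:R) * frob2 (\sum_(i < n) S i)
  >= (p%:R - 2 * d%:R) * (n ^ 2 * d)%:R
     + (\sum_(i < n) \sum_(j < n) frob2 (S i *m (S j)^T)) * d%:R
     + \sum_(i < n) \sum_(j < n) (frob2 (S i *m (S j)^T) - d%:R) * \tr (Delta i j)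
     + (p%:R - d%:R) *
         \sum_(i < n) \sum_(j < n) frob_ip (Delta i j) (1%:M - S i *m (S j)^T).
Proof.
move=> _ _ _ Delta_sym _ crit; have [S_orth _ _] := crit.
have A_sym i j : Amat Delta j i = (Amat Delta i j)^T.
  by rewrite /Amat linearD /= trmx1 Delta_sym.
have frob2_orth i : frob2 (S i *m (S i)^T) = d%:R.
  by rewrite S_orth /frob2 /frob_ip trmx1 mulmx1 mxtrace1.
have := second_order_trace_ineq crit.
under eq_bigr => i _ do under eq_bigr => j _ do
  rewrite mxtraceD mxtrace1 mxtrace_perp_proj_mul //.
under [X in _ <= X -> _]eq_bigr => i _ do
  rewrite mxtrace_Lambda // mxtrace_perp_proj_mul // frob2_orth.
under [X in _ <= X -> _]eq_bigr => i _ do under eq_bigr => j _ do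
  rewrite frob_ip_Amat.
under [X in _ -> _ + _ * X <= _]eq_bigr => i _ do under eq_bigr => j _ do
  rewrite frob_ip_1Br.
have cardE : (n ^ 2 * d)%:R = (#|'I_n| * #|'I_n|)%:R * d%:R :> R.
  by rewrite card_ord mulnn natrM.
rewrite frob2_sum cardE.
exact: sum_ineq_rearrange.
Qed.
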